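(* Let $\beta_U,\beta_H,\beta_R\ge 0$ with $\beta_U>0$, $\beta_H+\beta_R>0$ and $\beta_U+\beta_H+\beta_R=1$, and let $\gamma\in[0,1]$. For $x\in[0,1]$ put $p(x)=\beta_U+x\beta_R$ and $$E[R_r](x)=\frac{\beta_R}{\beta_R+\beta_H}\,(1-p(x))+\frac{(1-x)\beta_R}{\beta_H+(1-x)\beta_R}\,(1-p(x))\,\gamma+\frac{x\beta_R}{x\beta_R+\beta_U}\,p(x),$$ where any term whose denominator is $0$ is read as $0$. Then for all $x\in[0,1]$, $$E[R_r](x)=\beta_R\Big(1+\gamma+\Big(\frac{\beta_H}{\beta_H+\beta_R}-\gamma\Big)x\Big).$$ In particular, when $\beta_R>0$, the maximum of $E[R_r]$ over $x\in[0,1]$ is attained only at $x=1$ if $\gamma<\frac{\beta_H}{1-\beta_U}$, and only at $x=0$ if $\gamma>\frac{\beta_H}{1-\beta_U}$.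
   Context: Model of an undercutting attack with safe depth $D=1$ (the undercutter abandons its fork once it is one block behind). Miners are split into an undercutter with mining-power fraction $\beta_U$, honest miners with total fraction $\beta_H$, and the remaining rational (non-undercutting) miners with total fraction $\beta_R$. Fees are normalized so the main-chain block being undercut holds fee $1$, the next main-chain block and the undercutter's first fork block each hold $\gamma$, and the second fork block holds $1$. A fraction $x$ of the rational mining power moves to the fork after the fork and the main chain tie at one block each; $p(x)$ is the probability that the fork wins. $E[R_r](x)$ is the rational miners' expected fee revenue. *)

From HB Require Import structures.
From mathcomp Require Import all_boot all_order all_algebra.
Set Implicit Arguments. Unset Strict Implicit. Unset Printing Implicit Defensive.
Import Order.TTheory GRing.Theory Num.Theory.
Local Open Scope ring_scope.

Definition sdiv (R : fieldType) (a b : R) : R := if b == 0 then 0 else a / b.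

(* Probability that the fork wins when a fraction x of rational power moves. *)
Definition pfork (R : fieldType) (bU bR x : R) : R := bU + x * bR.

Definition ERr (R : fieldType) (bU bH bR g x : R) : R :=
  sdiv bR (bR + bH) * (1 - pfork bU bR x)
  + sdiv ((1 - x) * bR) (bH + (1 - x) * bR) * (1 - pfork bU bR x) * g
  + sdiv (x * bR) (x * bR + bU) * pfork bU bR x.

(** Both fork-dependent fractions in [ERr] are multiplied by their own
    denominator ([1 - p x = bH + (1 - x) bR] because the powers sum to 1, and
    [p x = x bR + bU]), so they cancel; when such a denominator vanishes so does
    its numerator.  Hence [ERr] is affine in [x] with slope
    [bR (bH / (bH + bR) - g)], and an affine function with nonzero
    slope has a unique maximiser on [[0, 1]], the endpoint selected by the
    sign of the slope. *)
From HB Require Import structures.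
From mathcomp Require Import all_boot all_order all_algebra.
From mathcomp Require Import ring lra.
Import Order.TTheory GRing.Theory Num.Theory.
Local Open Scope ring_scope.

Lemma sdivE (R : fieldType) (a b : R) : b != 0 -> sdiv a b = a / b.
Proof. by move=> b0; rewrite /sdiv (negbTE b0). Qed.

Lemma sdivK (R : fieldType) (a b : R) : (b = 0 -> a = 0) -> sdiv a b * b = a.
Proof.
rewrite /sdiv; case: eqP => [b0 ab0 | /eqP b0 _]; first by rewrite mul0r ab0.
by rewrite divfK.
Qed.

Lemma unique_argmax_affine {R : realDomainType} (f : R -> R) (k e : R) :
  0 <= e -> e <= 1 ->
  (forall x y, 0 <= x -> x <= 1 -> 0 <= y -> y <= 1 -> f x - f y = k * (x - y)) ->
  k != 0 ->
  (forall x, 0 <= x -> x <= 1 -> k * (x - e) <= 0) ->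
  (forall x, 0 <= x -> x <= 1 -> f x <= f e)
  /\ (forall x, 0 <= x -> x <= 1 -> f x = f e -> x = e).
Proof.
move=> e0 e1 fB k0 k_le0; split=> x x0 x1.
  by rewrite -subr_le0 fB // k_le0.
move/eqP; rewrite -subr_eq0 fB // mulf_eq0 (negbTE k0) subr_eq0.
exact: eqP.
Qed.

Section RationalRevenue.

Variables (R : realFieldType) (bU bH bR g : R).
Hypotheses (bH_ge0 : 0 <= bH) (bR_ge0 : 0 <= bR) (bU_gt0 : 0 < bU).
Hypotheses (bHR_gt0 : 0 < bH + bR) (powers_sum1 : bU + bH + bR = 1).

Lemma ERrE (x : R) : 0 <= x -> x <= 1 ->
  ERr bU bH bR g x = bR * (1 + g + (bH / (bH + bR) - g) * x).
Proof.
move=> x0 x1; have xbR_ge0 : 0 <= x * bR by rewrite mulr_ge0.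
have x'bR_ge0 : 0 <= (1 - x) * bR by rewrite mulr_ge0 ?subr_ge0.
have pfork_compl : 1 - pfork bU bR x = bH + (1 - x) * bR.
  by rewrite /pfork -{1}powers_sum1; ring.
rewrite /ERr pfork_compl sdivK; last first.
  by move/eqP; rewrite paddr_eq0 // => /andP[_ /eqP].
rewrite /pfork (addrC bU) sdivK; last first.
  by move/eqP; rewrite paddr_eq0 ?(ltW bU_gt0) // (gt_eqF bU_gt0) andbF.
rewrite sdivE; last by rewrite addrC lt0r_neq0.
by field; rewrite lt0r_neq0.
Qed.

Lemma ERrB (x y : R) : 0 <= x -> x <= 1 -> 0 <= y -> y <= 1 ->
  ERr bU bH bR g x - ERr bU bH bR g y = bR * (bH / (bH + bR) - g) * (x - y).
Proof. by move=> x0 x1 y0 y1; rewrite !ERrE //; ring. Qed.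

End RationalRevenue.

Theorem mainTheorem1 (R : realFieldType) (bU bH bR g : R) :
  0 <= bU -> 0 <= bH -> 0 <= bR -> 0 < bU -> 0 < bH + bR ->
  bU + bH + bR = 1 -> 0 <= g -> g <= 1 ->
  (forall x : R, 0 <= x -> x <= 1 ->
     ERr bU bH bR g x = bR * (1 + g + (bH / (bH + bR) - g) * x))
  /\ (0 < bR ->
      (g < bH / (1 - bU) ->
         (forall x : R, 0 <= x -> x <= 1 -> ERr bU bH bR g x <= ERr bU bH bR g 1)
         /\ (forall x : R, 0 <= x -> x <= 1 ->
               ERr bU bH bR g x = ERr bU bH bR g 1 -> x = 1))
      /\
      (bH / (1 - bU) < g ->
         (forall x : R, 0 <= x -> x <= 1 -> ERr bU bH bR g x <= ERr bU bH bR g 0)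
         /\ (forall x : R, 0 <= x -> x <= 1 ->
               ERr bU bH bR g x = ERr bU bH bR g 0 -> x = 0))).
Proof.
move=> _ bH_ge0 bR_ge0 bU_gt0 bHR_gt0 powers_sum1 _ _.
have ERr_affine := @ERrB R bU bH bR g bH_ge0 bR_ge0 bU_gt0 bHR_gt0 powers_sum1.
split=> [x|bR_gt0]; first exact: ERrE.
have -> : 1 - bU = bH + bR by lra.
set c := bH / (bH + bR) in ERr_affine *; split=> [g_lt_c | c_lt_g].
- have k_gt0 : 0 < bR * (c - g) by rewrite mulr_gt0 ?subr_gt0.
  apply: (unique_argmax_affine _ _ _ ler01 (lexx 1) ERr_affine).
    by rewrite gt_eqF.
  by move=> x _ x1; rewrite pmulr_rle0 // subr_le0.
- have k_lt0 : bR * (c - g) < 0 by rewrite pmulr_rlt0 ?subr_lt0.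
  apply: (unique_argmax_affine _ _ _ (lexx 0) ler01 ERr_affine).
    by rewrite lt_eqF.
  by move=> x x0 _; rewrite subr0 nmulr_rle0.
Qed.
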